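(* If $H$ is a breakable monoid, then $\mathcal{P}_{\mathrm{fin},1}(H)$ is UmF.
   Context: A monoid $H$ is breakable if $xy\in\{x,y\}$ for all $x,y\in H$. $\mathcal{P}_{\mathrm{fin},1}(H)$ denotes the set of non-empty finite subsets of $H$ containing $1_H$, a monoid under $XY=\{xy:x\in X,y\in Y\}$. In a monoid $M$: $x\mid_M y$ iff $y\in MxM$; $x,y$ are associated if each divides the other; proper divisor means divides but not associated. A unit-divisor divides $1_M$; otherwise it is a non-unit-divisor. An irreducible is a non-unit-divisor $a$ with $a\neq xy$ for all non-unit-divisors $x,y$ properly dividing $a$. A factorization of $x$ is a finite word over the irreducibles with product $x$. For words $\mathfrak a,\mathfrak b$, $\mathfrak a\sqsubseteq\mathfrak b$ means $\mathfrak a$ is, up to associatedness of letters, a subword (subsequence) of some permutation of $\mathfrak b$; equivalence means $\sqsubseteq$ both ways. A factorization $\mathfrak a$ of $x$ is minimal if no factorization $\mathfrak b$ of $x$ satisfies $\mathfrak b\sqsubseteq\mathfrak a\not\sqsubseteq\mathfrak b$. $M$ is UmF if every non-unit-divisor has a factorization and any two minimal factorizations of an element are equivalent. *)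

From Stdlib Require Import List Permutation.
Import ListNotations.
Set Implicit Arguments.

Record monoid := Monoid {
  mcarrier :> Type;
  mop : mcarrier -> mcarrier -> mcarrier;
  mone : mcarrier;
  mopA : forall x y z, mop x (mop y z) = mop (mop x y) z;
  mop1l : forall x, mop mone x = x;
  mop1r : forall x, mop x mone = x }.

Definition breakable (H : monoid) : Prop :=
  forall x y : H, mop H x y = x \/ mop H x y = y.

Definition fin_set (T : Type) (X : T -> Prop) : Prop :=
  exists l : list T, forall x, X x -> In x l.

(** non-empty finite subsets of H containing 1_H (non-emptiness follows from 1_H ∈ X) *)
Definition Pfin1 (H : monoid) : Type :=
  { X : H -> Prop | fin_set X /\ X (mone H) }.

Definition setmul (H : monoid) (X Y : H -> Prop) : H -> Prop :=
  fun z => exists x y, X x /\ Y y /\ z = mop H x y.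

Lemma setmul_fin (H : monoid) (X Y : H -> Prop) :
  fin_set X -> fin_set Y -> fin_set (setmul H X Y).
Proof.
  intros [lx Hx] [ly Hy].
  exists (flat_map (fun x => map (mop H x) ly) lx).
  intros z [x [y [Xx [Yy ->]]]].
  apply in_flat_map. exists x. split; [auto|]. apply in_map. auto.
Qed.

Lemma setmul_one (H : monoid) (X Y : H -> Prop) :
  X (mone H) -> Y (mone H) -> setmul H X Y (mone H).
Proof.
  intros HX HY. exists (mone H), (mone H). repeat split; auto.
  now rewrite mop1l.
Qed.

Definition Pmul (H : monoid) (X Y : Pfin1 H) : Pfin1 H :=
  exist _ (setmul H (proj1_sig X) (proj1_sig Y))
    (conj (setmul_fin H (proj1 (proj2_sig X)) (proj1 (proj2_sig Y)))
          (setmul_one H _ _ (proj2 (proj2_sig X)) (proj2 (proj2_sig Y)))).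

Lemma Pone_prop (H : monoid) :
  fin_set (fun z : H => z = mone H) /\ (fun z : H => z = mone H) (mone H).
Proof. split; [exists [mone H]; intros x ->; now left | reflexivity]. Qed.

Definition Pone (H : monoid) : Pfin1 H :=
  exist _ (fun z => z = mone H) (Pone_prop H).

Section Factorization.
Variables (M : Type) (op : M -> M -> M) (e : M).

Definition mdivides (x y : M) : Prop := exists u v, y = op (op u x) v.
Definition massociated (x y : M) : Prop := mdivides x y /\ mdivides y x.
Definition proper_divisor (x y : M) : Prop := mdivides x y /\ ~ massociated x y.
Definition unit_divisor (x : M) : Prop := mdivides x e.

Definition irreducible (a : M) : Prop :=
  ~ unit_divisor a /\
  forall x y, ~ unit_divisor x -> ~ unit_divisor y ->
    proper_divisor x a -> proper_divisor y a -> a <> op x y.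

Definition word_prod (w : list M) : M := fold_right op e w.

Definition factorization (w : list M) (x : M) : Prop :=
  Forall irreducible w /\ word_prod w = x.

Inductive subword {T : Type} : list T -> list T -> Prop :=
  | subword_nil : subword [] []
  | subword_skip : forall x l l', subword l l' -> subword l (x :: l')
  | subword_keep : forall x l l', subword l l' -> subword (x :: l) (x :: l').

Definition wsub (a b : list M) : Prop :=
  exists b' c, Permutation b b' /\ subword c b' /\ Forall2 massociated a c.

Definition wequiv (a b : list M) : Prop := wsub a b /\ wsub b a.

Definition minimal_factorization (a : list M) (x : M) : Prop :=
  factorization a x /\
  ~ (exists b, factorization b x /\ wsub b a /\ ~ wsub a b).

Definition UmF : Prop :=
  (forall x, ~ unit_divisor x -> exists w, factorization w x) /\
  (forall x a b, minimal_factorization a x -> minimal_factorization b x -> wequiv a b).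

End Factorization.

From Stdlib Require Import List Permutation ListDec Classical
  FunctionalExtensionality PropExtensionality ProofIrrelevance Lia.
Import ListNotations.
Set Implicit Arguments.

(** In a breakable monoid [x y] is [x] or [y], so for sets containing [1]
    the product [X Y] is just the union [X ∪ Y].  Hence divisibility in
    [P_fin,1(H)] is inclusion, associated elements are equal, the unit
    divisors are [{1}] alone and the irreducibles are the pairs [{1, a}]
    with [a <> 1].  Every [X] is the union of the [{1, a}], [a ∈ X \ {1}],
    and the letters of any factorization of [X] are exactly these pairs.
    A minimal factorization cannot repeat a letter (dropping the repeat
    gives a strictly shorter one), so two minimal factorizations are
    duplicate-free lists with the same letters, i.e. permutations of each
    other. *)

Lemma subword_refl {T : Type} (l : list T) : subword l l.
Proof. induction l; [apply subword_nil | apply subword_keep; auto]. Qed.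

Lemma subword_app_drop {T : Type} (l1 l2 : list T) x : subword (l1 ++ l2) (l1 ++ x :: l2).
Proof. induction l1; simpl; [apply subword_skip, subword_refl | apply subword_keep; auto]. Qed.

Lemma subword_length {T : Type} (l l' : list T) : subword l l' -> length l <= length l'.
Proof. induction 1; simpl; lia. Qed.

Section Words.
Variables (M : Type) (op : M -> M -> M) (e : M).
Hypotheses (op1l : forall x, op e x = x) (op1r : forall x, op x e = x).

Lemma massociated_refl (x : M) : massociated op x x.
Proof. split; exists e, e; now rewrite op1l, op1r. Qed.

Lemma Forall2_massociated_refl (l : list M) : Forall2 (massociated op) l l.
Proof. induction l; constructor; auto using massociated_refl. Qed.

Lemma wsub_length (a b : list M) : wsub op a b -> length a <= length b.
Proof.
  intros [b' [c [Hperm [Hsub Hassoc]]]].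
  rewrite (Permutation_length Hperm), (Forall2_length Hassoc).
  exact (subword_length Hsub).
Qed.

Lemma wsub_Permutation (a b : list M) : Permutation b a -> wsub op a b.
Proof.
  intro Hperm. exists a, a.
  auto using subword_refl, Forall2_massociated_refl.
Qed.

Lemma wsub_app_drop (l1 l2 : list M) x : wsub op (l1 ++ l2) (l1 ++ x :: l2).
Proof.
  exists (l1 ++ x :: l2), (l1 ++ l2).
  auto using subword_app_drop, Forall2_massociated_refl.
Qed.

Lemma not_wsub_app_insert (l1 l2 : list M) x : ~ wsub op (l1 ++ x :: l2) (l1 ++ l2).
Proof. intro Hw. apply wsub_length in Hw. rewrite !length_app in Hw. simpl in Hw. lia. Qed.

End Words.

Lemma classical_filter {T : Type} (P : T -> Prop) (l : list T) :
  exists l', forall z, In z l' <-> In z l /\ P z.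
Proof.
  induction l as [|x l [l' Hl']].
  - exists []. simpl. tauto.
  - destruct (classic (P x)) as [Px|nPx].
    + exists (x :: l'). intro z. simpl. rewrite Hl'. intuition congruence.
    + exists l'. intro z. simpl. rewrite Hl'. intuition congruence.
Qed.

Definition Pmem (H : monoid) (X : Pfin1 H) : H -> Prop := proj1_sig X.
Coercion Pmem : Pfin1 >-> Funclass.

Lemma Pfin1_ext (H : monoid) (X Y : Pfin1 H) : (forall z, X z <-> Y z) -> X = Y.
Proof.
  destruct X as [X HX], Y as [Y HY]; unfold Pmem; simpl; intro Hext.
  assert (X = Y) as <-.
  { apply functional_extensionality; intro z. apply propositional_extensionality, Hext. }
  f_equal. apply proof_irrelevance.
Qed.

Lemma Pfin1_one (H : monoid) (X : Pfin1 H) : X (mone H).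
Proof. exact (proj2 (proj2_sig X)). Qed.

Lemma Pmul1l (H : monoid) (X : Pfin1 H) : Pmul (Pone H) X = X.
Proof.
  apply Pfin1_ext; intro z; unfold Pmem; simpl; split.
  - intros [x [y [-> [Hy ->]]]]. now rewrite mop1l.
  - intro Hz. exists (mone H), z. now rewrite mop1l.
Qed.

Lemma Pmul1r (H : monoid) (X : Pfin1 H) : Pmul X (Pone H) = X.
Proof.
  apply Pfin1_ext; intro z; unfold Pmem; simpl; split.
  - intros [x [y [Hx [-> ->]]]]. now rewrite mop1r.
  - intro Hz. exists z, (mone H). now rewrite mop1r.
Qed.

Lemma Pone_mem (H : monoid) (z : H) : Pone H z <-> z = mone H.
Proof. reflexivity. Qed.

Definition Patom (H : monoid) (a : H) : Pfin1 H.
Proof.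
  exists (fun z => z = mone H \/ z = a). split.
  - exists [mone H; a]. intros x [-> | ->]; simpl; auto.
  - now left.
Defined.

Lemma Patom_mem (H : monoid) (a z : H) : Patom H a z <-> z = mone H \/ z = a.
Proof. reflexivity. Qed.

Definition Premove (H : monoid) (X : Pfin1 H) (p : H) (Hp : p <> mone H) : Pfin1 H.
Proof.
  exists (fun z => X z /\ z <> p). split.
  - destruct (proj1 (proj2_sig X)) as [l Hl]. exists l. intros x [Hx _]. exact (Hl x Hx).
  - split; [apply Pfin1_one | congruence].
Defined.

Lemma Premove_mem (H : monoid) (X : Pfin1 H) p (Hp : p <> mone H) z :
  Premove X Hp z <-> X z /\ z <> p.
Proof. reflexivity. Qed.

Section Breakable.
Variables (H : monoid) (Hbr : breakable H).

Notation P := (Pfin1 H).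
Notation one := (mone H).
Notation divides := (mdivides (@Pmul H)).
Notation word := (word_prod (@Pmul H) (Pone H)).
Notation irred := (irreducible (@Pmul H) (Pone H)).
Notation unitdiv := (unit_divisor (@Pmul H) (Pone H)).

Lemma Pmul_mem (X Y : P) z : Pmul X Y z <-> X z \/ Y z.
Proof.
  unfold Pmem; simpl; split.
  - intros [x [y [Hx [Hy ->]]]]. destruct (Hbr x y) as [-> | ->]; auto.
  - intros [Hz | Hz].
    + exists z, one. rewrite mop1r. repeat split; [exact Hz | apply Pfin1_one].
    + exists one, z. rewrite mop1l. repeat split; [apply Pfin1_one | exact Hz].
Qed.

Lemma Pdivides_iff (X Y : P) : divides X Y <-> (forall z, X z -> Y z).
Proof.
  split.
  - intros [U [V ->]] z Hz. rewrite !Pmul_mem. auto.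
  - intro Hsub. exists (Pone H), Y. rewrite Pmul1l.
    apply Pfin1_ext. intro z. rewrite Pmul_mem. intuition.
Qed.

Lemma Passociated_eq (X Y : P) : massociated (@Pmul H) X Y -> X = Y.
Proof.
  unfold massociated. rewrite !Pdivides_iff. intros [HXY HYX].
  apply Pfin1_ext. split; auto.
Qed.

Lemma Pproper_divisor_iff (X Y : P) :
  proper_divisor (@Pmul H) X Y <-> (forall z, X z -> Y z) /\ X <> Y.
Proof.
  unfold proper_divisor. rewrite Pdivides_iff. split.
  - intros [Hsub Hnassoc]. split; auto. intros <-. apply Hnassoc.
    exact (massociated_refl _ _ (@Pmul1l H) (@Pmul1r H) X).
  - intros [Hsub Hneq]. split; auto. intro Hassoc. exact (Hneq (Passociated_eq Hassoc)).
Qed.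

Lemma Pnot_unit_divisor_iff (X : P) : ~ unitdiv X <-> exists a, X a /\ a <> one.
Proof.
  unfold unit_divisor. rewrite Pdivides_iff. split.
  - intro Hnu. apply NNPP. intro Hno. apply Hnu. intros z Hz.
    apply NNPP. intro Hz1. eauto.
  - intros [a [Ha Ha1]] Hsub. exact (Ha1 (Hsub a Ha)).
Qed.

Lemma irreducible_Patom (a : H) : a <> one -> irred (Patom H a).
Proof.
  intro Ha1. split.
  - apply Pnot_unit_divisor_iff. exists a. split; [right|]; auto.
  - intros X Y HXnu _ HXa _ _.
    apply Pnot_unit_divisor_iff in HXnu as [b [Hb Hb1]].
    apply Pproper_divisor_iff in HXa as [HXa HXneq].
    destruct (HXa b Hb) as [? | ->]; [contradiction|].
    apply HXneq, Pfin1_ext. intro z. split; auto.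
    intros [-> | ->]; auto using Pfin1_one.
Qed.

(** An element [z ∉ {1, a}] of [A] would split [A] as [(A \ {z}) ∪ {1, z}]
    into two proper non-unit divisors. *)
Lemma irreducible_Patom_inv (A : P) : irred A -> exists a, a <> one /\ A = Patom H a.
Proof.
  intros [HAnu HAirr].
  destruct (proj1 (Pnot_unit_divisor_iff A) HAnu) as [a [Ha Ha1]].
  exists a. split; auto. apply Pfin1_ext. intro z. rewrite Patom_mem. split.
  - intro Hz. apply NNPP. intro Hza.
    assert (Hz1 : z <> one) by tauto.
    apply (HAirr (Premove A Hz1) (Patom H z)).
    + apply Pnot_unit_divisor_iff. exists a. rewrite Premove_mem. intuition.
    + apply Pnot_unit_divisor_iff. exists z. rewrite Patom_mem. auto.
    + apply Pproper_divisor_iff. split.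
      * intro w. rewrite Premove_mem. tauto.
      * intros Heq. assert (HAz := Hz). rewrite <- Heq, Premove_mem in HAz. tauto.
    + apply Pproper_divisor_iff. split.
      * intros w [-> | ->]; auto using Pfin1_one.
      * intros Heq. assert (Haz := Ha). rewrite <- Heq, Patom_mem in Haz. intuition congruence.
    + apply Pfin1_ext. intro w. rewrite Pmul_mem, Premove_mem, Patom_mem.
      destruct (classic (w = z)) as [-> |]; intuition (subst; auto using Pfin1_one).
  - intros [-> | ->]; auto using Pfin1_one.
Qed.

Lemma word_prod_mem (w : list P) z : word w z <-> z = one \/ exists A, In A w /\ A z.
Proof.
  induction w as [|B w IH]; cbn [word_prod fold_right In].
  - rewrite Pone_mem. firstorder.
  - rewrite Pmul_mem, IH. split.
    + intros [Hz | [Hz | [A [HA Hz]]]]; eauto.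
    + intros [-> | [A [[<- | HA] Hz]]]; auto using Pfin1_one. eauto.
Qed.

Lemma factorization_letters (w : list P) (X : P) :
  factorization (@Pmul H) (Pone H) w X ->
  forall A, In A w <-> exists a, a <> one /\ X a /\ A = Patom H a.
Proof.
  intros [Hirr <-] A. rewrite Forall_forall in Hirr. split.
  - intro HA. destruct (irreducible_Patom_inv (Hirr A HA)) as [a [Ha1 ->]].
    exists a. rewrite word_prod_mem. split; [exact Ha1 | split; [right | reflexivity]].
    exists (Patom H a). split; [exact HA | now right].
  - intros [a [Ha1 [Ha ->]]].
    apply word_prod_mem in Ha as [? | [B [HB Ha]]]; [contradiction|].
    destruct (irreducible_Patom_inv (Hirr B HB)) as [b [Hb1 ->]].
    destruct Ha as [? | ->]; [contradiction | assumption].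
Qed.

Lemma factorization_exists (X : P) : exists w, factorization (@Pmul H) (Pone H) w X.
Proof.
  destruct (proj1 (proj2_sig X)) as [l Hl].
  destruct (classical_filter (fun z => X z /\ z <> one) l) as [l' Hl'].
  exists (map (Patom H) l'). split.
  - apply Forall_forall. intros A HA. apply in_map_iff in HA as [a [<- Ha]].
    apply irreducible_Patom, Hl', Ha.
  - apply Pfin1_ext. intro z. rewrite word_prod_mem. split.
    + intros [-> | [A [HA Hz]]]; auto using Pfin1_one.
      apply in_map_iff in HA as [a [<- Ha]]. apply Hl' in Ha.
      destruct Hz as [-> | ->]; [apply Pfin1_one | tauto].
    + intro Hz. destruct (classic (z = one)) as [| Hz1]; [now left | right].
      exists (Patom H z). rewrite in_map_iff, Patom_mem. split; [|now right].
      exists z. rewrite Hl'. auto.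
Qed.

Lemma word_prod_same_letters (u v : list P) :
  (forall A, In A u <-> In A v) -> word u = word v.
Proof.
  intro Huv. apply Pfin1_ext. intro z. rewrite !word_prod_mem.
  split; intros [? | [A [HA Hz]]]; auto; right; exists A; split; auto; apply Huv, HA.
Qed.

Lemma minimal_factorization_NoDup (w : list P) (X : P) :
  minimal_factorization (@Pmul H) (Pone H) w X -> NoDup w.
Proof.
  intros [[Hirr Hprod] Hmin]. apply NNPP. intro Hdup.
  destruct (not_NoDup (fun A B => classic (A = B)) Hdup) as [A [l1 [l2 [l3 ->]]]].
  rewrite app_comm_cons, app_assoc in *.
  set (l := l1 ++ A :: l2) in *.
  assert (HA : In A l) by (apply in_or_app; simpl; auto).
  assert (Hletters : forall B, In B (l ++ l3) <-> In B (l ++ A :: l3)).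
  { intro B. rewrite !in_app_iff. simpl. intuition (subst; auto). }
  apply Hmin. exists (l ++ l3). split; [split|split].
  - rewrite Forall_forall in *. intros B HB. apply Hirr, Hletters, HB.
  - rewrite <- Hprod. apply word_prod_same_letters, Hletters.
  - exact (wsub_app_drop _ _ (@Pmul1l H) (@Pmul1r H) l l3 A).
  - apply not_wsub_app_insert.
Qed.

End Breakable.

Theorem proposition4p7 (H : monoid) :
  breakable H -> UmF (@Pmul H) (Pone H).
Proof.
  intro Hbr. split.
  - intros X _. exact (factorization_exists Hbr X).
  - intros X a b Ha Hb.
    assert (Hperm : Permutation a b).
    { apply NoDup_Permutation; eauto using minimal_factorization_NoDup.
      intro A. rewrite (factorization_letters Hbr (proj1 Ha)).
      symmetry. exact (factorization_letters Hbr (proj1 Hb) A). }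
    split; apply (wsub_Permutation _ _ (@Pmul1l H) (@Pmul1r H));
      auto using Permutation_sym.
Qed.
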